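(* Let $f(a,b,c,d,e,x,y)$ be analytic in a neighbourhood of the origin of $\mathbb{C}^7$. Suppose that, with $F(X,Y)=f(a,b,c,d,e,X,Y)$, $f$ satisfies in a neighbourhood of the origin the equation $$x\Big\{F(x,y)-F(x,yq)-(d+e)q^{-1}\big[F(x,yq)-F(x,yq^2)\big]+de\,q^{-2}\big[F(x,yq^2)-F(x,yq^3)\big]\Big\}$$ $$=y\Big\{\big[F(x,y)-F(xq,y)\big]-(a+b+c)\big[F(x,yq)-F(xq,yq)\big]+(ab+ac+bc)\big[F(x,yq^2)-F(xq,yq^2)\big]-abc\big[F(x,yq^3)-F(xq,yq^3)\big]\Big\}.$$ Then, in some neighbourhood of the origin, $$f(a,b,c,d,e,x,y)=\mathbb{T}(a,b,c,d,e,yD_x)\{f(a,b,c,d,e,x,0)\}=\sum_{n\ge0}\frac{(a,b,c;q)_n}{(q,d,e;q)_n}\,y^n\,D_x^n\{f(a,b,c,d,e,x,0)\},$$ and the series converges there.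
   Context: Throughout, $0<q<1$. $(\alpha;q)_0=1$, $(\alpha;q)_n=\prod_{j=0}^{n-1}(1-\alpha q^j)$, and $(\alpha_1,\dots,\alpha_r;q)_n=\prod_i(\alpha_i;q)_n$. $D_x$ is the $q$-derivative acting on the variable $x$ with all other variables fixed: $D_x\{g(x)\}=\frac{g(x)-g(xq)}{x}$. For a function analytic at $0$, $D_x$ acts termwise on the power series, $D_x\{x^m\}=(1-q^m)x^{m-1}$, which gives the value at $x=0$ by continuity. The operator is $\mathbb{T}(a,b,c,d,e,yD_x)=\sum_{n\ge0}\frac{(a,b,c;q)_n}{(q,d,e;q)_n}(yD_x)^n$. *)

From Stdlib Require Import Reals ClassicalDescription ClassicalEpsilon.
From Coquelicot Require Import Coquelicot.

Open Scope C_scope.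

Fixpoint qpoch (q : R) (alpha : C) (n : nat) : C :=
  match n with
  | O => 1
  | S m => qpoch q alpha m * (1 - alpha * (RtoC q) ^ m)
  end.

Definition Tcoef (q : R) (a b c d e : C) (n : nat) : C :=
  (qpoch q a n * qpoch q b n * qpoch q c n)
  / (qpoch q (RtoC q) n * qpoch q d n * qpoch q e n).

(* Value of a limit (if it exists; 0 otherwise) of g(x) as x -> x0, x <> x0. *)
Definition climit (g : C -> C) (x0 : C) : C :=
  match excluded_middle_informative
          (exists l : C, filterlim g (locally' x0) (locally l)) with
  | left H => proj1_sig (constructive_indefinite_description _ H)
  | right _ => 0
  end.

(* q-derivative D g (x) = (g x - g (x q)) / x for x <> 0, extended to x = 0
   by continuity (its limit as x -> 0). *)
Definition Dq (q : R) (g : C -> C) (x : C) : C :=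
  match excluded_middle_informative (x = 0) with
  | left _ => climit (fun t => (g t - g (t * RtoC q)) / t) 0
  | right _ => (g x - g (x * RtoC q)) / x
  end.

Definition Dqn (q : R) (n : nat) (g : C -> C) : C -> C := Nat.iter n (Dq q) g.

(* Analyticity at the origin of C^7: a 7-variable power series with
   coefficients [cf], absolutely convergent on the closed polydisc of
   radius r > 0 (bounded cube partial sums of |c_k| r^|k|), which converges
   (cube partial sums) to f on the open polydisc of radius r. *)
Definition cube_sum7 (N : nat)
  (t : nat -> nat -> nat -> nat -> nat -> nat -> nat -> C) : C :=
  sum_n (fun k1 => sum_n (fun k2 => sum_n (fun k3 => sum_n (fun k4 =>
  sum_n (fun k5 => sum_n (fun k6 => sum_n (fun k7 =>
    t k1 k2 k3 k4 k5 k6 k7) N) N) N) N) N) N) N.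

Definition cube_sum7R (N : nat)
  (t : nat -> nat -> nat -> nat -> nat -> nat -> nat -> R) : R :=
  sum_n (fun k1 => sum_n (fun k2 => sum_n (fun k3 => sum_n (fun k4 =>
  sum_n (fun k5 => sum_n (fun k6 => sum_n (fun k7 =>
    t k1 k2 k3 k4 k5 k6 k7) N) N) N) N) N) N) N.

Definition analytic_at_origin7 (f : C -> C -> C -> C -> C -> C -> C -> C) : Prop :=
  exists (cf : nat -> nat -> nat -> nat -> nat -> nat -> nat -> C) (r M : R),
    (0 < r)%R /\
    (forall N : nat,
        (cube_sum7R N (fun k1 k2 k3 k4 k5 k6 k7 =>
           Cmod (cf k1 k2 k3 k4 k5 k6 k7) * r ^ (k1+k2+k3+k4+k5+k6+k7)) <= M)%R) /\
    (forall z1 z2 z3 z4 z5 z6 z7 : C,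
        (Cmod z1 < r)%R -> (Cmod z2 < r)%R -> (Cmod z3 < r)%R ->
        (Cmod z4 < r)%R -> (Cmod z5 < r)%R -> (Cmod z6 < r)%R ->
        (Cmod z7 < r)%R ->
        filterlim
          (fun N => cube_sum7 N (fun k1 k2 k3 k4 k5 k6 k7 =>
              cf k1 k2 k3 k4 k5 k6 k7 * z1 ^ k1 * z2 ^ k2 * z3 ^ k3 * z4 ^ k4
              * z5 ^ k5 * z6 ^ k6 * z7 ^ k7))
          eventually (locally (f z1 z2 z3 z4 z5 z6 z7))).

(* Write f(x,y) = sum_n A_n(x) y^n, the coefficients A_n being the
   six-fold sums of the Taylor series of f with the power of y frozen
   ("y-expansion").  They exist, satisfy |A_n| r^n <= M, and are Lipschitz
   in x at 0.  Expanding both sides of the equation in powers of y and using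
   the identity theorem for power series gives the recurrence
     x A_(n+1)(x) (1-q^(n+1))(1-dq^n)(1-eq^n)
        = (A_n(x) - A_n(qx)) (1-aq^n)(1-bq^n)(1-cq^n),
   which is also the recurrence of T_n = (a,b,c;q)_n/(q,d,e;q)_n.  Since
   A_0(x) = f(x,0), induction gives A_n = T_n D_q^n f(.,0): for x <> 0 this
   is the recurrence divided by x, and at x = 0 (where D_q is defined by
   continuity) it follows from the Lipschitz estimate of A_(n+1). *)

From Stdlib Require Import Reals ClassicalEpsilon Lra Lia.
From Coquelicot Require Import Coquelicot.
Open Scope C_scope.

Lemma Cmod_sub_le (x y : C) : (Cmod (x - y) <= Cmod x + Cmod y)%R.
Proof. unfold Cminus. rewrite <- (Cmod_opp y). apply Cmod_triangle. Qed.

Lemma sumC_Sn (g : nat -> C) (n : nat) : sum_n g (S n) = sum_n g n + g (S n).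
Proof. exact (sum_Sn g n). Qed.

Lemma lim_eps {K : AbsRing} {V : NormedModule K} (s : nat -> V) (l : V) :
  filterlim s eventually (locally l) <->
  (forall eps, (0 < eps)%R ->
     exists N0, forall N, (N0 <= N)%nat -> (norm (minus (s N) l) < eps)%R).
Proof.
  split.
  - intros H eps Heps.
    apply (H (ball_norm l (mkposreal eps Heps))).
    apply locally_le_locally_norm, locally_norm_ball_norm.
  - intros H P HP. apply locally_norm_le_locally in HP.
    destruct HP as [eps He]. destruct (H eps (cond_pos eps)) as [N0 HN].
    exists N0. intros N HN0. apply He, HN, HN0.
Qed.

Lemma limC_eps (s : nat -> C) (l : C) :
  filterlim s eventually (locally l) <->
  (forall eps, (0 < eps)%R ->
     exists N0, forall N, (N0 <= N)%nat -> (Cmod (s N - l) < eps)%R).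
Proof. exact (lim_eps s l). Qed.

Lemma limC_le (s : nat -> C) (l : C) (B : R) (N0 : nat) :
  filterlim s eventually (locally l) ->
  (forall N, (N0 <= N)%nat -> (Cmod (s N) <= B)%R) -> (Cmod l <= B)%R.
Proof.
  intros Hs HB. apply Rnot_lt_le; intros Hlt.
  destruct (proj1 (limC_eps s l) Hs (Cmod l - B)%R) as [N1 HN1]; [lra|].
  set (N := max N0 N1).
  specialize (HN1 N ltac:(lia)). specialize (HB N ltac:(lia)).
  pose proof (Cmod_sub_le (s N) (s N - l)) as Htri.
  replace (s N - (s N - l)) with l in Htri by ring.
  lra.
Qed.

Lemma limC_plus (u v : nat -> C) (lu lv : C) :
  filterlim u eventually (locally lu) -> filterlim v eventually (locally lv) ->
  filterlim (fun N => u N + v N) eventually (locally (lu + lv)).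
Proof.
  intros Hu Hv.
  exact (filterlim_comp_2 u v Cplus Hu Hv (filterlim_plus (V:=C_NormedModule) lu lv)).
Qed.

Lemma limC_scal (u : nat -> C) (lu c : C) :
  filterlim u eventually (locally lu) ->
  filterlim (fun N => c * u N) eventually (locally (c * lu)).
Proof.
  intros Hu. eapply filterlim_comp; [exact Hu|].
  exact (filterlim_scal_r (V:=C_NormedModule) c lu).
Qed.

Lemma limC_scal_r (u : nat -> C) (lu c : C) :
  filterlim u eventually (locally lu) ->
  filterlim (fun N => u N * c) eventually (locally (lu * c)).
Proof.
  intros Hu. rewrite Cmult_comm.
  eapply filterlim_ext; [|exact (limC_scal u lu c Hu)]. intros N; simpl; ring.
Qed.

Lemma limC_minus (u v : nat -> C) (lu lv : C) :
  filterlim u eventually (locally lu) -> filterlim v eventually (locally lv) ->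
  filterlim (fun N => u N - v N) eventually (locally (lu - lv)).
Proof.
  intros Hu Hv. apply (limC_scal _ _ (-1)) in Hv.
  replace (lu - lv) with (lu + -1 * lv) by ring.
  eapply filterlim_ext; [|exact (limC_plus _ _ _ _ Hu Hv)].
  intros N; simpl; ring.
Qed.

Lemma limC_sum (h : nat -> nat -> C) (l : nat -> C) (L : nat) :
  (forall n, filterlim (fun N => h N n) eventually (locally (l n))) ->
  filterlim (fun N => sum_n (h N) L) eventually (locally (sum_n l L)).
Proof.
  intros H. induction L as [|L IH].
  - rewrite sum_O. eapply filterlim_ext; [|apply (H 0%nat)].
    intros N; simpl. now rewrite sum_O.
  - rewrite sumC_Sn. eapply filterlim_ext; [|exact (limC_plus _ _ _ _ IH (H (S L)))].
    intros N; simpl. now rewrite sumC_Sn.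
Qed.

Lemma seriesC_plus (u v : nat -> C) (lu lv : C) :
  is_series u lu -> is_series v lv -> is_series (fun n => u n + v n) (lu + lv).
Proof. exact (is_series_plus (V := C_NormedModule) u v lu lv). Qed.

Lemma seriesC_minus (u v : nat -> C) (lu lv : C) :
  is_series u lu -> is_series v lv -> is_series (fun n => u n - v n) (lu - lv).
Proof. exact (is_series_minus (V := C_NormedModule) u v lu lv). Qed.

Lemma seriesC_scal (c : C) (u : nat -> C) (lu : C) :
  is_series u lu -> is_series (fun n => c * u n) (c * lu).
Proof. exact (is_series_scal (V := C_NormedModule) c u lu). Qed.

Lemma seriesC_eq (u : nat -> C) (l l' : C) : is_series u l -> @eq C l l' -> is_series u l'.
Proof. now intros H <-. Qed.

(* Prepending a zero term to a series does not change its sum; this is how the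
   product of a series by [y] is re-indexed. *)
Definition shift (u : nat -> C) (n : nat) : C :=
  match n with O => 0 | S m => u m end.

Lemma seriesC_shift (u : nat -> C) (l : C) : is_series u l -> is_series (shift u) l.
Proof.
  intros H. apply is_series_decr_1.
  change (is_series u (l + - 0)). now replace (l + - 0) with l by ring.
Qed.

Definition limC (s : nat -> C) : C :=
  match excluded_middle_informative (exists l : C, filterlim s eventually (locally l)) with
  | left H => proj1_sig (constructive_indefinite_description _ H)
  | right _ => 0
  end.

Lemma limC_spec (s : nat -> C) :
  (exists l : C, filterlim s eventually (locally l)) ->
  filterlim s eventually (locally (limC s)).
Proof.
  intros H. unfold limC. destruct excluded_middle_informative as [H'|H']; [|contradiction].
  exact (proj2_sig (constructive_indefinite_description _ H')).
Qed.

Lemma cauchy_dominated (s : nat -> C) (S : nat -> R) (B : R) :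
  (forall N d, (Cmod (s (N + d)%nat - s N) <= S (N + d)%nat - S N)%R) ->
  (forall N, (S N <= B)%R) ->
  exists l, filterlim s eventually (locally l).
Proof.
  intros Hd HB.
  assert (Hinc : forall n, (S n <= S (Datatypes.S n))%R).
  { intros n. specialize (Hd n 1%nat). rewrite Nat.add_1_r in Hd.
    pose proof (Cmod_ge_0 (s (Datatypes.S n) - s n)). lra. }
  destruct (ex_finite_lim_seq_incr S B Hinc HB) as [L HL].
  assert (HSeq : forall eps, (0 < eps)%R -> exists N0, forall u v, (N0 <= u)%nat -> (N0 <= v)%nat ->
             (Cmod (s v - s u) < eps)%R).
  { intros eps Heps.
    destruct (proj1 (lim_eps S L) HL (eps / 2)%R) as [N0 HN0]; [lra|].
    assert (Hmono : forall u v, (N0 <= u)%nat -> (u <= v)%nat -> (Cmod (s v - s u) < eps)%R).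
    { intros u v Hu Huv. replace v with (u + (v - u))%nat by lia.
      eapply Rle_lt_trans; [apply Hd|]. replace (u + (v - u))%nat with v by lia.
      pose proof (HN0 u Hu) as H1. pose proof (HN0 v ltac:(lia)) as H2.
      change (Rabs (S u - L) < eps / 2)%R in H1. change (Rabs (S v - L) < eps / 2)%R in H2.
      apply Rabs_def2 in H1. apply Rabs_def2 in H2. lra. }
    exists N0. intros u v Hu Hv. destruct (Nat.le_ge_cases u v) as [Huv|Hvu].
    - now apply Hmono.
    - replace (s v - s u) with (- (s u - s v)) by ring. rewrite Cmod_opp. now apply Hmono. }
  apply (proj1 (filterlim_locally_cauchy
           (U := CompleteNormedModule.CompleteSpace _ C_CompleteNormedModule) s)).
  intros eps. destruct (HSeq eps (cond_pos eps)) as [N0 HN0].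
  exists (fun n => (N0 <= n)%nat). split; [now exists N0|].
  intros u v Hu Hv. apply (norm_compat1 (V := C_NormedModule)). now apply HN0.
Qed.

Lemma geom_partial_tail (g : nat -> C) (K th : R) (L d : nat) :
  (0 <= th < 1)%R -> (0 <= K)%R -> (forall n, (Cmod (g n) <= K * th ^ n)%R) ->
  (Cmod (sum_n g (L + d) - sum_n g L) <= K * th ^ S L / (1 - th))%R.
Proof.
  intros Hth HK Hg.
  assert (Hexact : (Cmod (sum_n g (L + d) - sum_n g L)
                    <= K * th ^ S L * (1 - th ^ d) / (1 - th))%R).
  { induction d as [|d IH].
    - rewrite Nat.add_0_r. replace (sum_n g L - sum_n g L) with (RtoC 0) by ring.
      rewrite Cmod_0, pow_O. unfold Rdiv. rewrite Rminus_diag, Rmult_0_r, Rmult_0_l. lra.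
    - rewrite Nat.add_succ_r, sumC_Sn.
      replace (sum_n g (L + d) + g (S (L + d)) - sum_n g L)
        with ((sum_n g (L + d) - sum_n g L) + g (S (L + d))) by ring.
      eapply Rle_trans; [apply Cmod_triangle|].
      eapply Rle_trans; [apply Rplus_le_compat; [apply IH|apply Hg]|].
      right. replace (S (L + d)) with (S L + d)%nat by lia.
      rewrite pow_add. simpl pow. field. lra. }
  eapply Rle_trans; [exact Hexact|].
  unfold Rdiv. apply Rmult_le_compat_r; [apply Rlt_le, Rinv_0_lt_compat; lra|].
  assert (0 <= th ^ d)%R by (apply pow_le; lra).
  assert (0 <= K * th ^ S L)%R by (apply Rmult_le_pos; [lra|apply pow_le; lra]).
  nra.
Qed.

Lemma diagonal_tail_bound (g : nat -> nat -> C) (G : nat -> C) (l : C) (K th : R) :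
  (0 <= th < 1)%R -> (0 <= K)%R ->
  (forall N n, (Cmod (g N n) <= K * th ^ n)%R) ->
  (forall n, filterlim (fun N => g N n) eventually (locally (G n))) ->
  filterlim (fun N => sum_n (g N) N) eventually (locally l) ->
  forall L, (Cmod (l - sum_n G L) <= K * th ^ S L / (1 - th))%R.
Proof.
  intros Hth HK Hg HG Hl L.
  apply (limC_le (fun N => sum_n (g N) N - sum_n (g N) L) _ _ L).
  - apply limC_minus; [exact Hl|]. now apply limC_sum.
  - intros N HN. replace N with (L + (N - L))%nat by lia.
    now apply geom_partial_tail.
Qed.

Lemma diagonal_series (g : nat -> nat -> C) (G : nat -> C) (l : C) (K th : R) :
  (0 <= th < 1)%R -> (0 <= K)%R ->
  (forall N n, (Cmod (g N n) <= K * th ^ n)%R) ->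
  (forall n, filterlim (fun N => g N n) eventually (locally (G n))) ->
  filterlim (fun N => sum_n (g N) N) eventually (locally l) ->
  is_series G l.
Proof.
  intros Hth HK Hg HG Hl.
  pose proof (diagonal_tail_bound g G l K th Hth HK Hg HG Hl) as Htail.
  apply limC_eps. intros eps Heps.
  destruct (pow_lt_1_zero th ltac:(rewrite Rabs_pos_eq; lra) (eps * (1 - th) / (K + 1))%R)
    as [L0 HL0].
  { apply Rdiv_lt_0_compat; [apply Rmult_lt_0_compat|]; lra. }
  exists L0. intros L HL.
  specialize (Htail L). specialize (HL0 (S L) ltac:(lia)).
  rewrite Rabs_pos_eq in HL0 by (apply pow_le; lra).
  change (Cmod (sum_n G L - l) < eps)%R.
  replace (sum_n G L - l) with (- (l - sum_n G L)) by ring. rewrite Cmod_opp.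
  eapply Rle_lt_trans; [exact Htail|].
  apply Rlt_div_l; [lra|]. apply Rlt_div_r in HL0; [|lra].
  assert (0 <= th ^ S L)%R by (apply pow_le; lra).
  nra.
Qed.

(** ** Identity theorem for power series *)

Lemma le_0_of_le_small (X C0 delta : R) :
  (0 < delta)%R -> (forall s, (0 < s)%R -> (s <= delta)%R -> (X <= C0 * s)%R) ->
  (X <= 0)%R.
Proof.
  intros Hd H. apply Rnot_lt_le; intros HX.
  set (s := Rmin delta (X / (2 * (Rabs C0 + 1)))).
  assert (HC : (0 < 2 * (Rabs C0 + 1))%R) by (pose proof (Rabs_pos C0); lra).
  assert (Hs : (0 < s)%R) by (apply Rmin_pos; [lra|apply Rdiv_lt_0_compat; lra]).
  assert (Hs1 : (s * (2 * (Rabs C0 + 1)) <= X)%R).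
  { apply Rle_div_r; [lra|]. apply Rmin_r. }
  specialize (H s Hs (Rmin_l _ _)).
  pose proof (Rle_abs C0). pose proof (Rabs_pos C0). nra.
Qed.

Lemma sum_n_last (g : nat -> C) (n : nat) :
  (forall m, (m < n)%nat -> g m = 0) -> @eq C (sum_n g n) (g n).
Proof.
  intros H. destruct n as [|n]; [apply sum_O|].
  rewrite sumC_Sn. replace (sum_n g n) with (RtoC 0); [ring|].
  clear -H. induction n as [|n IH].
  - rewrite sum_O, H; [reflexivity|lia].
  - rewrite sumC_Sn, <- IH, (H (S n)); [ring|lia|]. intros m Hm; apply H; lia.
Qed.

(* If the coefficients below [n] vanish, the series evaluated at a small
   [s > 0] is dominated by its [n]-th term; if it sums to [0], that term is
   controlled by the geometric tail, which gives [|e_n| R0^n = O(s)]. *)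
Lemma first_coef_small (e : nat -> C) (K R0 s : R) (n : nat) :
  (0 < R0)%R -> (0 <= K)%R -> (forall m, (Cmod (e m) * R0 ^ m <= K)%R) ->
  (forall m, (m < n)%nat -> e m = 0) ->
  (0 < s)%R -> (s <= R0 / 2)%R -> is_series (fun m => e m * RtoC s ^ m) (RtoC 0) ->
  (Cmod (e n) * R0 ^ n <= 2 * K / R0 * s)%R.
Proof.
  intros HR0 HK0 HK Hlow Hs Hs1 Hser.
  set (th := (s / R0)%R).
  assert (Hth : (0 < th <= 1 / 2)%R).
  { unfold th. split; [apply Rdiv_lt_0_compat; lra|]. apply Rle_div_l; lra. }
  assert (Hsn : forall m, (s ^ m = th ^ m * R0 ^ m)%R).
  { intros m. unfold th. rewrite <- Rpow_mult_distr. f_equal. field. lra. }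
  assert (Hy : Cmod (RtoC s) = s) by (rewrite Cmod_R, Rabs_pos_eq; lra).
  set (g := fun m => e m * RtoC s ^ m).
  assert (Hg : forall m, (Cmod (g m) <= K * th ^ m)%R).
  { intros m. unfold g. rewrite Cmod_mult, Cmod_pow, Hy, Hsn.
    specialize (HK m). assert (0 <= th ^ m)%R by (apply pow_le; lra).
    replace (Cmod (e m) * (th ^ m * R0 ^ m))%R with (Cmod (e m) * R0 ^ m * th ^ m)%R by ring.
    apply Rmult_le_compat_r; assumption. }
  assert (Hlead : (Cmod (g n) <= K * th ^ S n / (1 - th))%R).
  { pose proof (diagonal_tail_bound (fun _ => g) g (RtoC 0) K th ltac:(lra) HK0 (fun _ => Hg)
                  (fun m => filterlim_const (g m)) Hser n) as Ht.
    rewrite sum_n_last in Ht by (intros m Hm; unfold g; rewrite (Hlow m Hm); ring).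
    replace (RtoC 0 - g n) with (- g n) in Ht by ring. now rewrite Cmod_opp in Ht. }
  unfold g in Hlead. rewrite Cmod_mult, Cmod_pow, Hy, Hsn in Hlead. simpl pow in Hlead.
  assert (Htn : (0 < th ^ n)%R) by (apply pow_lt; lra).
  assert (Hgeo : (K * (th * th ^ n) / (1 - th) <= 2 * K * th * th ^ n)%R).
  { apply Rle_div_l; [lra|].
    assert (0 <= K * th * th ^ n)%R by (apply Rmult_le_pos; [nra|lra]). nra. }
  apply (Rmult_le_reg_r (th ^ n)); [exact Htn|].
  replace (2 * K / R0 * s * th ^ n)%R with (2 * K * th * th ^ n)%R by (unfold th; field; lra).
  replace (Cmod (e n) * R0 ^ n * th ^ n)%R with (Cmod (e n) * (th ^ n * R0 ^ n))%R by ring.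
  lra.
Qed.

Lemma pseries_coef_zero (e : nat -> C) (K R0 R1 : R) :
  (0 < R0)%R -> (0 < R1)%R ->
  (forall n, (Cmod (e n) * R0 ^ n <= K)%R) ->
  (forall y, (Cmod y < R1)%R -> is_series (fun n => e n * y ^ n) (RtoC 0)) ->
  forall n, e n = 0.
Proof.
  intros HR0 HR1 HK Hser.
  assert (HK0 : (0 <= K)%R).
  { specialize (HK 0%nat). pose proof (Cmod_ge_0 (e 0%nat)). simpl in HK. lra. }
  intros n. induction n as [n IH] using (well_founded_induction Wf_nat.lt_wf).
  assert (HRn : (0 < R0 ^ n)%R) by (apply pow_lt; lra).
  apply Cmod_eq_0, Rle_antisym; [|apply Cmod_ge_0].
  enough (Hle : (Cmod (e n) * R0 ^ n <= 0)%R)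
    by (pose proof (Cmod_ge_0 (e n)); nra).
  apply (le_0_of_le_small _ (2 * K / R0) (Rmin (R0 / 2) (R1 / 2))); [apply Rmin_pos; lra|].
  intros s Hs Hsd.
  assert (Hs1 : (s <= R0 / 2)%R) by (eapply Rle_trans; [exact Hsd|apply Rmin_l]).
  assert (Hs2 : (s <= R1 / 2)%R) by (eapply Rle_trans; [exact Hsd|apply Rmin_r]).
  apply first_coef_small; try assumption.
  apply Hser. rewrite Cmod_R, Rabs_pos_eq; lra.
Qed.

(* [nf k X]: arrays of elements of [X] indexed by [k] natural numbers, and
   their "cube" partial sums over [0..N]^k; [cube_sum7] and [cube_sum7R] of
   the definitions are the case [k = 7]. *)
Fixpoint nf (k : nat) (X : Type) : Type :=
  match k with O => X | S k => nat -> nf k X end.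

Fixpoint cube {G : AbelianMonoid} (k N : nat) : nf k G -> G :=
  match k with
  | O => fun t => t
  | S k => fun t => sum_n (fun i => cube k N (t i)) N
  end.

Fixpoint slice {X : Type} (k : nat) : nf (S k) X -> nat -> nf k X :=
  match k with
  | O => fun t n => t n
  | S k => fun t n i => slice k (t i) n
  end.

Lemma cube_slice {G : AbelianMonoid} (k N : nat) (t : nf (S k) G) :
  cube (S k) N t = sum_n (fun n => cube k N (slice k t n)) N.
Proof.
  induction k as [|k IH]; simpl; [reflexivity|].
  rewrite (sum_n_ext _ (fun i => sum_n (fun n => cube k N (slice k (t i) n)) N)).
  - apply sum_n_switch.
  - intros i. apply (IH (t i)).
Qed.

Fixpoint nscale {K : Ring} (k : nat) : nf k K -> K -> nf k K :=
  match k with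
  | O => fun t c => mult t c
  | S k => fun t c i => nscale k (t i) c
  end.

Lemma cube_nscale {K : Ring} (k N : nat) (t : nf k K) (c : K) :
  cube k N (nscale k t c) = mult (cube k N t) c.
Proof.
  revert t; induction k as [|k IH]; simpl; intros t; [reflexivity|].
  rewrite <- sum_n_mult_r. apply sum_n_ext; intros i; apply IH.
Qed.

Fixpoint nonneg_array (k : nat) : nf k R -> Prop :=
  match k with O => fun T => (0 <= T)%R | S k => fun T => forall i, nonneg_array k (T i) end.

Fixpoint le_array (k : nat) : nf k R -> nf k R -> Prop :=
  match k with
  | O => fun T T' => (T <= T')%R
  | S k => fun T T' => forall i, le_array k (T i) (T' i)
  end.

Lemma sumR_nonneg (G : nat -> R) (N : nat) :
  (forall i, 0 <= G i)%R -> (0 <= sum_n G N)%R.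
Proof.
  intros H; induction N as [|N IH]; [rewrite sum_O; apply H|].
  rewrite sum_Sn. specialize (H (S N)). change (0 <= sum_n G N + G (S N))%R. lra.
Qed.

Lemma sumR_le (G G' : nat -> R) (N : nat) :
  (forall i, G i <= G' i)%R -> (sum_n G N <= sum_n G' N)%R.
Proof.
  intros H; induction N as [|N IH]; [rewrite !sum_O; apply H|].
  rewrite !sum_Sn. specialize (H (S N)). change (sum_n G N + G (S N) <= sum_n G' N + G' (S N))%R.
  lra.
Qed.

Lemma sumR_mono (G : nat -> R) (N d : nat) :
  (forall i, 0 <= G i)%R -> (sum_n G N <= sum_n G (N + d))%R.
Proof.
  intros H; induction d as [|d IH]; [rewrite Nat.add_0_r; lra|].
  rewrite Nat.add_succ_r, sum_Sn. specialize (H (S (N + d))).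
  change (sum_n G N <= sum_n G (N + d) + G (S (N + d)))%R. lra.
Qed.

Lemma sumR_ge_term (G : nat -> R) (n N : nat) :
  (forall i, 0 <= G i)%R -> (n <= N)%nat -> (G n <= sum_n G N)%R.
Proof.
  intros H Hn. induction Hn as [|N Hn IH].
  - destruct n as [|n]; [rewrite sum_O; lra|].
    rewrite sum_Sn. pose proof (sumR_nonneg G n H). change (G (S n) <= sum_n G n + G (S n))%R.
    lra.
  - rewrite sum_Sn. specialize (H (S N)). change (G n <= sum_n G N + G (S N))%R. lra.
Qed.

Lemma cube_nonneg (k N : nat) (T : nf k R) : nonneg_array k T -> (0 <= cube k N T)%R.
Proof.
  revert T; induction k as [|k IH]; simpl; intros T H; [exact H|].
  apply sumR_nonneg; intros i; apply IH, H.
Qed.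

Lemma cube_le (k N : nat) (T T' : nf k R) : le_array k T T' -> (cube k N T <= cube k N T')%R.
Proof.
  revert T T'; induction k as [|k IH]; simpl; intros T T' H; [exact H|].
  apply sumR_le; intros i; apply IH, H.
Qed.

Lemma cube_mono (k N d : nat) (T : nf k R) :
  nonneg_array k T -> (cube k N T <= cube k (N + d) T)%R.
Proof.
  revert T; induction k as [|k IH]; simpl; intros T H; [lra|].
  apply Rle_trans with (sum_n (fun i => cube k (N + d) (T i)) N).
  - apply sumR_le. intros i; apply IH, H.
  - apply sumR_mono. intros i; apply cube_nonneg, H.
Qed.

Lemma sumC_bound (g : nat -> C) (G : nat -> R) (N : nat) :
  (forall i, Cmod (g i) <= G i)%R -> (Cmod (sum_n g N) <= sum_n G N)%R.
Proof.
  intros H; induction N as [|N IH]; [rewrite !sum_O; apply H|].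
  rewrite sumC_Sn, sum_Sn. eapply Rle_trans; [apply Cmod_triangle|].
  specialize (H (S N)). change (Cmod (sum_n g N) + Cmod (g (S N)) <= sum_n G N + G (S N))%R.
  lra.
Qed.

Lemma sumC_diff_bound (g h : nat -> C) (D : nat -> R) (N : nat) :
  (forall i, Cmod (g i - h i) <= D i)%R ->
  (Cmod (sum_n g N - sum_n h N) <= sum_n D N)%R.
Proof.
  intros H; induction N as [|N IH]; [rewrite !sum_O; apply H|].
  rewrite !sumC_Sn, sum_Sn.
  replace (sum_n g N + g (S N) - (sum_n h N + h (S N)))
    with ((sum_n g N - sum_n h N) + (g (S N) - h (S N))) by ring.
  eapply Rle_trans; [apply Cmod_triangle|].
  specialize (H (S N)). change (Cmod (sum_n g N - sum_n h N) + Cmod (g (S N) - h (S N))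
                                <= sum_n D N + D (S N))%R.
  lra.
Qed.

Lemma sumR_minus (G G' : nat -> R) (N : nat) :
  sum_n (fun i => G' i - G i)%R N = (sum_n G' N - sum_n G N)%R.
Proof.
  induction N as [|N IH]; [now rewrite !sum_O|].
  rewrite !sum_Sn, IH. change (sum_n G' N - sum_n G N + (G' (S N) - G (S N))
                               = sum_n G' N + G' (S N) - (sum_n G N + G (S N)))%R. ring.
Qed.

Lemma sumC_shell (g g' : nat -> C) (G G' : nat -> R) (N d : nat) :
  (forall i, Cmod (g' i - g i) <= G' i - G i)%R ->
  (forall i, Cmod (g' i) <= G' i)%R ->
  (Cmod (sum_n g' (N + d) - sum_n g N) <= sum_n G' (N + d) - sum_n G N)%R.
Proof.
  intros H1 H2; induction d as [|d IH].
  - rewrite Nat.add_0_r, <- sumR_minus. now apply sumC_diff_bound.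
  - rewrite Nat.add_succ_r, sumC_Sn, sum_Sn.
    replace (sum_n g' (N + d) + g' (S (N + d)) - sum_n g N)
      with ((sum_n g' (N + d) - sum_n g N) + g' (S (N + d))) by ring.
    eapply Rle_trans; [apply Cmod_triangle|].
    specialize (H2 (S (N + d))).
    change (Cmod (sum_n g' (N + d) - sum_n g N) + Cmod (g' (S (N + d)))
            <= sum_n G' (N + d) + G' (S (N + d)) - sum_n G N)%R.
    lra.
Qed.

Fixpoint dom (k : nat) : nf k C -> nf k R -> Prop :=
  match k with
  | O => fun t T => (Cmod t <= T)%R
  | S k => fun t T => forall i, dom k (t i) (T i)
  end.

Lemma dom_bound (k N : nat) (t : nf k C) (T : nf k R) :
  dom k t T -> (Cmod (cube k N t) <= cube k N T)%R.
Proof.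
  revert t T; induction k as [|k IH]; simpl; intros t T H; [exact H|].
  apply sumC_bound; intros i; apply IH, H.
Qed.

Lemma dom_shell (k N d : nat) (t : nf k C) (T : nf k R) :
  dom k t T ->
  (Cmod (cube k (N + d) t - cube k N t) <= cube k (N + d) T - cube k N T)%R.
Proof.
  revert t T; induction k as [|k IH]; simpl; intros t T H.
  - replace (t - t) with (RtoC 0) by ring. rewrite Cmod_0; lra.
  - apply sumC_shell; intros i; [apply IH, H|apply dom_bound, H].
Qed.

Lemma dom_cube_lim (k : nat) (t : nf k C) (T : nf k R) (B : R) :
  dom k t T -> (forall N, (cube k N T <= B)%R) ->
  filterlim (fun N => cube k N t) eventually (locally (limC (fun N => cube k N t)))
  /\ (Cmod (limC (fun N => cube k N t)) <= B)%R.
Proof.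
  intros Hd HB.
  assert (Hl : filterlim (fun N => cube k N t) eventually
                 (locally (limC (fun N => cube k N t)))).
  { apply limC_spec, (cauchy_dominated _ (fun N => cube k N T) B); [|exact HB].
    intros N d. now apply dom_shell. }
  split; [exact Hl|].
  apply (limC_le _ _ _ 0 Hl). intros N _.
  eapply Rle_trans; [apply dom_bound, Hd|apply HB].
Qed.

Fixpoint dom_diff (k : nat) (c : R) : nf k C -> nf k C -> nf k R -> Prop :=
  match k with
  | O => fun t s T => (Cmod (t - s) <= c * T)%R
  | S k => fun t s T => forall i, dom_diff k c (t i) (s i) (T i)
  end.

Lemma dom_diff_bound (k N : nat) (c : R) (t s : nf k C) (T : nf k R) :
  dom_diff k c t s T -> (Cmod (cube k N t - cube k N s) <= c * cube k N T)%R.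
Proof.
  revert t s T; induction k as [|k IH]; simpl; intros t s T H; [exact H|].
  change (c * sum_n (fun i => cube k N (T i)) N)%R
    with (@mult R_Ring c (sum_n (fun i => cube k N (T i)) N)).
  rewrite <- (sum_n_mult_l (K := R_Ring)).
  apply sumC_diff_bound; intros i; apply IH, H.
Qed.

(** ** Expansion of [f] in powers of [y] *)

Definition coef7 : Type := nat -> nat -> nat -> nat -> nat -> nat -> nat -> C.

Definition term7 (cf : coef7) (a b c d e x y : C) : nf 7 C :=
  fun k1 k2 k3 k4 k5 k6 k7 =>
    cf k1 k2 k3 k4 k5 k6 k7 * a ^ k1 * b ^ k2 * c ^ k3 * d ^ k4 * e ^ k5 * x ^ k6 * y ^ k7.

Definition weight7 (cf : coef7) (r : R) : nf 7 R :=
  fun k1 k2 k3 k4 k5 k6 k7 =>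
    (Cmod (cf k1 k2 k3 k4 k5 k6 k7) * r ^ (k1 + k2 + k3 + k4 + k5 + k6 + k7))%R.

Definition taylor7_converges (f : C -> C -> C -> C -> C -> C -> C -> C) (cf : coef7) (r : R)
  : Prop :=
  forall z1 z2 z3 z4 z5 z6 z7 : C,
    (Cmod z1 < r)%R -> (Cmod z2 < r)%R -> (Cmod z3 < r)%R -> (Cmod z4 < r)%R ->
    (Cmod z5 < r)%R -> (Cmod z6 < r)%R -> (Cmod z7 < r)%R ->
    filterlim (fun N => cube 7 N (term7 cf z1 z2 z3 z4 z5 z6 z7)) eventually
      (locally (f z1 z2 z3 z4 z5 z6 z7)).

Definition yterm (cf : coef7) (a b c d e x : C) (n : nat) : nf 6 C :=
  fun k1 k2 k3 k4 k5 k6 =>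
    cf k1 k2 k3 k4 k5 k6 n * a ^ k1 * b ^ k2 * c ^ k3 * d ^ k4 * e ^ k5 * x ^ k6.

Definition yweight (cf : coef7) (r : R) (n : nat) : nf 6 R :=
  fun k1 k2 k3 k4 k5 k6 =>
    (Cmod (cf k1 k2 k3 k4 k5 k6 n) * r ^ (k1 + k2 + k3 + k4 + k5 + k6))%R.

Definition ycoef (cf : coef7) (a b c d e x : C) (n : nat) : C :=
  limC (fun N => cube 6 N (yterm cf a b c d e x n)).

Lemma Cmod_mul_pow_le (w z : C) (W rr : R) (k : nat) :
  (Cmod w <= W)%R -> (Cmod z <= rr)%R -> (Cmod (w * z ^ k) <= W * rr ^ k)%R.
Proof.
  intros Hw Hz. rewrite Cmod_mult, Cmod_pow.
  apply Rmult_le_compat; [apply Cmod_ge_0|apply pow_le, Cmod_ge_0|exact Hw|].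
  apply pow_incr. split; [apply Cmod_ge_0|exact Hz].
Qed.

Lemma geom_weight (z y : C) (r M : R) (n : nat) :
  (0 < r)%R -> (Cmod z * r ^ n <= M)%R -> (Cmod (z * y ^ n) <= M * (Cmod y / r) ^ n)%R.
Proof.
  intros Hr Hz. rewrite Cmod_mult, Cmod_pow. unfold Rdiv.
  rewrite Rpow_mult_distr, pow_inv.
  assert (0 < r ^ n)%R by (apply pow_lt; lra).
  assert (0 <= Cmod y ^ n)%R by (apply pow_le, Cmod_ge_0).
  apply Rle_div_r in Hz; [|assumption]. unfold Rdiv in Hz.
  replace (M * (Cmod y ^ n * / r ^ n))%R with (M * / r ^ n * Cmod y ^ n)%R by ring.
  apply Rmult_le_compat_r; assumption.
Qed.

Section YExpansion.

Variables (f : C -> C -> C -> C -> C -> C -> C -> C) (cf : coef7) (r M : R).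
Hypothesis Hr : (0 < r)%R.
Hypothesis HB : forall N, (cube 7 N (weight7 cf r) <= M)%R.
Hypothesis HC : taylor7_converges f cf r.

Lemma weight7_nonneg : nonneg_array 7 (weight7 cf r).
Proof.
  simpl; intros. apply Rmult_le_pos; [apply Cmod_ge_0|apply pow_le; lra].
Qed.

Lemma M_nonneg : (0 <= M)%R.
Proof. eapply Rle_trans; [apply (cube_nonneg 7 0), weight7_nonneg|apply HB]. Qed.

(* The weights of the [y^n]-coefficient, rescaled by [r^n], form a slice of
   the full weight array; hence their cube sums are bounded by [M]. *)
Lemma yweight_bound (N n : nat) : (cube 6 N (yweight cf r n) * r ^ n <= M)%R.
Proof.
  assert (Hslice : nonneg_array 6 (slice 6 (weight7 cf r) n))
    by (pose proof weight7_nonneg as H; cbn [nonneg_array slice] in *; auto).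
  assert (Hscale : (cube 6 N (yweight cf r n) * r ^ n)%R
                   = cube 6 N (nscale (K := R_Ring) 6 (yweight cf r n) (r ^ n)%R))
    by (symmetry; apply (cube_nscale (K := R_Ring))).
  rewrite Hscale.
  apply Rle_trans with (cube 6 N (slice 6 (weight7 cf r) n)).
  { apply cube_le. cbn [le_array nscale slice]; intros. unfold yweight, weight7.
    rewrite (pow_add r _ n). change (mult ?u ?v) with (u * v)%R. right; ring. }
  apply Rle_trans with (cube 6 (N + n) (slice 6 (weight7 cf r) n)); [now apply cube_mono|].
  eapply Rle_trans; [|apply (HB (N + n))]. rewrite (cube_slice 6 (N + n) (weight7 cf r)).
  apply (sumR_ge_term (fun m => cube 6 (N + n) (slice 6 (weight7 cf r) m))); [|lia].
  intros m. apply cube_nonneg. pose proof weight7_nonneg as H; cbn [nonneg_array slice] in *; auto.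
Qed.

Lemma dom_yterm (a b c d e x : C) (n : nat) :
  (Cmod a <= r)%R -> (Cmod b <= r)%R -> (Cmod c <= r)%R -> (Cmod d <= r)%R ->
  (Cmod e <= r)%R -> (Cmod x <= r)%R -> dom 6 (yterm cf a b c d e x n) (yweight cf r n).
Proof.
  intros Ha Hb Hc Hd He Hx. simpl. intros k1 k2 k3 k4 k5 k6. unfold yterm, yweight.
  rewrite !pow_add, <- !Rmult_assoc.
  repeat apply Cmod_mul_pow_le; auto. lra.
Qed.

Lemma ycoef_spec (a b c d e x : C) (n : nat) :
  (Cmod a <= r)%R -> (Cmod b <= r)%R -> (Cmod c <= r)%R -> (Cmod d <= r)%R ->
  (Cmod e <= r)%R -> (Cmod x <= r)%R ->
  filterlim (fun N => cube 6 N (yterm cf a b c d e x n)) eventually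
    (locally (ycoef cf a b c d e x n))
  /\ (Cmod (ycoef cf a b c d e x n) * r ^ n <= M)%R.
Proof.
  intros Ha Hb Hc Hd He Hx.
  assert (Hrn : (0 < r ^ n)%R) by (apply pow_lt; lra).
  destruct (dom_cube_lim 6 (yterm cf a b c d e x n) (yweight cf r n) (M / r ^ n))
    as [Hl Hbound].
  - now apply dom_yterm.
  - intros N. apply Rle_div_r; [exact Hrn|apply yweight_bound].
  - split; [exact Hl|]. apply Rle_div_r; [exact Hrn|exact Hbound].
Qed.

(* Only the terms with a positive power of [x] change when [x] is replaced
   by [0]; each of them carries a factor of size at most [|x|/r]. *)
Lemma dom_diff_yterm (a b c d e x : C) (n : nat) :
  (Cmod a <= r)%R -> (Cmod b <= r)%R -> (Cmod c <= r)%R -> (Cmod d <= r)%R ->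
  (Cmod e <= r)%R -> (Cmod x <= r)%R ->
  dom_diff 6 (Cmod x / r) (yterm cf a b c d e x n) (yterm cf a b c d e 0 n) (yweight cf r n).
Proof.
  intros Ha Hb Hc Hd He Hx. cbn [dom_diff]. intros k1 k2 k3 k4 k5 k6. unfold yterm, yweight.
  set (w := cf k1 k2 k3 k4 k5 k6 n * a ^ k1 * b ^ k2 * c ^ k3 * d ^ k4 * e ^ k5).
  set (W := (Cmod (cf k1 k2 k3 k4 k5 k6 n) * r ^ (k1 + k2 + k3 + k4 + k5))%R).
  assert (Hw : (Cmod w <= W)%R).
  { unfold w, W. rewrite !pow_add, <- !Rmult_assoc.
    repeat apply Cmod_mul_pow_le; auto. lra. }
  assert (HW : (0 <= W)%R) by (eapply Rle_trans; [apply Cmod_ge_0|exact Hw]).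
  assert (Hxr : (0 <= Cmod x / r)%R) by (apply Rdiv_le_0_compat; [apply Cmod_ge_0|lra]).
  replace (Cmod (cf k1 k2 k3 k4 k5 k6 n) * r ^ (k1 + k2 + k3 + k4 + k5 + k6))%R
    with (W * r ^ k6)%R by (unfold W; rewrite (pow_add r (k1 + k2 + k3 + k4 + k5) k6); ring).
  destruct k6 as [|k].
  - replace (w * x ^ 0 - w * 0 ^ 0) with (RtoC 0) by (simpl; ring).
    rewrite Cmod_0. apply Rmult_le_pos; [exact Hxr|apply Rmult_le_pos; [exact HW|lra]].
  - replace (w * x ^ S k - w * 0 ^ S k) with (w * x ^ k * x) by (simpl; ring).
    rewrite Cmod_mult.
    replace (Cmod x / r * (W * r ^ S k))%R with (W * r ^ k * Cmod x)%R
      by (simpl; field; lra).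
    apply Rmult_le_compat_r; [apply Cmod_ge_0|]. now apply Cmod_mul_pow_le.
Qed.

Lemma ycoef_near0 (a b c d e x : C) (n : nat) :
  (Cmod a <= r)%R -> (Cmod b <= r)%R -> (Cmod c <= r)%R -> (Cmod d <= r)%R ->
  (Cmod e <= r)%R -> (Cmod x <= r)%R ->
  (Cmod (ycoef cf a b c d e x n - ycoef cf a b c d e 0 n) <= Cmod x / r * (M / r ^ n))%R.
Proof.
  intros Ha Hb Hc Hd He Hx.
  assert (H0 : (Cmod 0 <= r)%R) by (rewrite Cmod_0; lra).
  destruct (ycoef_spec a b c d e x n Ha Hb Hc Hd He Hx) as [Hlx _].
  destruct (ycoef_spec a b c d e 0 n Ha Hb Hc Hd He H0) as [Hl0 _].
  apply (limC_le _ _ _ 0 (limC_minus _ _ _ _ Hlx Hl0)). intros N _.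
  eapply Rle_trans; [apply dom_diff_bound, dom_diff_yterm; assumption|].
  apply Rmult_le_compat_l; [apply Rdiv_le_0_compat; [apply Cmod_ge_0|lra]|].
  apply Rle_div_r; [apply pow_lt; lra|apply yweight_bound].
Qed.

Lemma y_expansion (a b c d e x y : C) :
  (Cmod a < r)%R -> (Cmod b < r)%R -> (Cmod c < r)%R -> (Cmod d < r)%R ->
  (Cmod e < r)%R -> (Cmod x < r)%R -> (Cmod y < r)%R ->
  is_series (fun n => ycoef cf a b c d e x n * y ^ n) (f a b c d e x y).
Proof.
  intros Ha Hb Hc Hd He Hx Hy.
  apply (diagonal_series (fun N n => cube 6 N (yterm cf a b c d e x n) * y ^ n) _ _
           M (Cmod y / r)).
  - split; [apply Rdiv_le_0_compat; [apply Cmod_ge_0|lra]|].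
    apply Rlt_div_l; lra.
  - exact M_nonneg.
  - intros N n. apply geom_weight; [exact Hr|].
    eapply Rle_trans; [|apply (yweight_bound N n)].
    apply Rmult_le_compat_r; [apply pow_le; lra|].
    apply dom_bound, dom_yterm; lra.
  - intros n. apply limC_scal_r, ycoef_spec; lra.
  - eapply filterlim_ext; [|apply HC; assumption]. intros N.
    cbv beta. rewrite (cube_slice 6 N (term7 cf a b c d e x y)).
    apply sum_n_ext; intros n.
    exact (cube_nscale (K := C_Ring) 6 N (yterm cf a b c d e x n) (y ^ n)).
Qed.

End YExpansion.

(* Consecutive coefficients [(a,b,c;q)_n / (q,d,e;q)_n] differ by the ratio
   [rfac n / lfac (n+1)]. *)
Definition lfac (q : R) (d e : C) (n : nat) : C :=
  (1 - RtoC q ^ n) * (1 - d * RtoC q ^ (n - 1)) * (1 - e * RtoC q ^ (n - 1)).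

Definition rfac (q : R) (a b c : C) (n : nat) : C :=
  (1 - a * RtoC q ^ n) * (1 - b * RtoC q ^ n) * (1 - c * RtoC q ^ n).

Lemma Cmod_Rpos (q : R) : (0 < q)%R -> Cmod (RtoC q) = q.
Proof. intros Hq. rewrite Cmod_R, Rabs_pos_eq; lra. Qed.

Lemma Cmod_qpow_le (q : R) (n : nat) :
  (0 < q)%R -> (q < 1)%R -> (Cmod (RtoC q ^ n) <= 1)%R.
Proof.
  intros Hq0 Hq1. rewrite Cmod_pow, Cmod_Rpos by exact Hq0.
  rewrite <- (pow1 n). apply pow_incr; lra.
Qed.

Lemma Cmod_mul_le1 (z w : C) : (Cmod z <= 1)%R -> (Cmod w <= 1)%R -> (Cmod (z * w) <= 1)%R.
Proof.
  intros Hz Hw. rewrite Cmod_mult.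
  pose proof (Cmod_ge_0 z). pose proof (Cmod_ge_0 w). nra.
Qed.

Lemma Cmod_mul_lt1 (z w : C) : (Cmod z < 1)%R -> (Cmod w <= 1)%R -> (Cmod (z * w) < 1)%R.
Proof.
  intros Hz Hw. rewrite Cmod_mult.
  pose proof (Cmod_ge_0 z). pose proof (Cmod_ge_0 w). nra.
Qed.

Lemma one_minus_nz (z : C) : (Cmod z < 1)%R -> 1 - z <> 0.
Proof.
  intros Hz H. replace z with (RtoC 1) in Hz by (rewrite <- (Cplus_0_l z), <- H; ring).
  rewrite Cmod_1 in Hz. lra.
Qed.

Lemma Cmod_three_factors_le (z1 z2 z3 : C) :
  (Cmod z1 <= 1)%R -> (Cmod z2 <= 1)%R -> (Cmod z3 <= 1)%R ->
  (Cmod ((1 - z1) * (1 - z2) * (1 - z3)) <= 8)%R.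
Proof.
  intros H1 H2 H3.
  assert (Hf : forall z, (Cmod z <= 1)%R -> (Cmod (1 - z) <= 2)%R).
  { intros z Hz. eapply Rle_trans; [apply Cmod_sub_le|]. rewrite Cmod_1; lra. }
  rewrite !Cmod_mult.
  pose proof (Hf z1 H1). pose proof (Hf z2 H2). pose proof (Hf z3 H3).
  pose proof (Cmod_ge_0 (1 - z1)). pose proof (Cmod_ge_0 (1 - z2)).
  pose proof (Cmod_ge_0 (1 - z3)).
  assert (Cmod (1 - z1) * Cmod (1 - z2) <= 4)%R by nra.
  assert (0 <= Cmod (1 - z1) * Cmod (1 - z2))%R by nra.
  nra.
Qed.

Section QFactors.

Variable q : R.
Hypotheses (hq0 : (0 < q)%R) (hq1 : (q < 1)%R).

Lemma Cmod_mul_qpow_le (z : C) (j : nat) : (Cmod (z * RtoC q ^ j) <= Cmod z)%R.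
Proof.
  rewrite Cmod_mult. pose proof (Cmod_qpow_le q j hq0 hq1).
  pose proof (Cmod_ge_0 z). pose proof (Cmod_ge_0 (RtoC q ^ j)). nra.
Qed.

Lemma lfac_bound (d e : C) (n : nat) :
  (Cmod d <= 1)%R -> (Cmod e <= 1)%R -> (Cmod (lfac q d e n) <= 8)%R.
Proof.
  intros Hd He. pose proof (Cmod_qpow_le q n hq0 hq1).
  pose proof (Cmod_qpow_le q (n - 1) hq0 hq1).
  apply Cmod_three_factors_le; try apply Cmod_mul_le1; assumption.
Qed.

Lemma rfac_bound (a b c : C) (n : nat) :
  (Cmod a <= 1)%R -> (Cmod b <= 1)%R -> (Cmod c <= 1)%R -> (Cmod (rfac q a b c n) <= 8)%R.
Proof.
  intros Ha Hb Hc. pose proof (Cmod_qpow_le q n hq0 hq1).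
  apply Cmod_three_factors_le; apply Cmod_mul_le1; assumption.
Qed.

Lemma lfac_nz (d e : C) (n : nat) :
  (Cmod d < 1)%R -> (Cmod e < 1)%R -> lfac q d e (S n) <> 0.
Proof.
  intros Hd He. unfold lfac. replace (S n - 1)%nat with n by lia.
  pose proof (Cmod_qpow_le q n hq0 hq1) as Hqn.
  repeat apply Cmult_neq_0; apply one_minus_nz; try (apply Cmod_mul_lt1; assumption).
  rewrite Cpow_S. apply Cmod_mul_lt1; [rewrite Cmod_Rpos|]; assumption.
Qed.

Lemma qpoch_nz (al : C) (n : nat) : (Cmod al < 1)%R -> qpoch q al n <> 0.
Proof.
  intros Ha. induction n as [|n IH]; simpl; [apply C1_nz|].
  apply Cmult_neq_0; [exact IH|]. apply one_minus_nz, Cmod_mul_lt1; [exact Ha|].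
  now apply Cmod_qpow_le.
Qed.

Lemma Tcoef_nz (a b c d e : C) (n : nat) :
  (Cmod a < 1)%R -> (Cmod b < 1)%R -> (Cmod c < 1)%R -> (Cmod d < 1)%R ->
  (Cmod e < 1)%R -> Tcoef q a b c d e n <> 0.
Proof.
  intros Ha Hb Hc Hd He.
  assert (Hq : (Cmod (RtoC q) < 1)%R) by (rewrite Cmod_Rpos; assumption).
  unfold Tcoef. apply Cmod_gt_0.
  rewrite Cmod_div by (repeat apply Cmult_neq_0; now apply qpoch_nz).
  apply Rdiv_lt_0_compat; apply Cmod_gt_0; repeat apply Cmult_neq_0; now apply qpoch_nz.
Qed.

Lemma Tcoef_S (a b c d e : C) (n : nat) :
  (Cmod d < 1)%R -> (Cmod e < 1)%R ->
  Tcoef q a b c d e (S n) * lfac q d e (S n) = Tcoef q a b c d e n * rfac q a b c n.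
Proof.
  intros Hd He.
  assert (Hq : (Cmod (RtoC q) < 1)%R) by (rewrite Cmod_Rpos; assumption).
  pose proof (qpoch_nz (RtoC q) (S n) Hq) as H1.
  pose proof (qpoch_nz d (S n) Hd) as H2.
  pose proof (qpoch_nz e (S n) He) as H3.
  simpl in H1, H2, H3.
  unfold Tcoef, lfac, rfac. simpl qpoch. replace (S n - 1)%nat with n by lia.
  rewrite (Cpow_S (RtoC q) n) in *.
  field. repeat split; intros Hz;
    first [apply H1; rewrite Hz; ring | apply H2; rewrite Hz; ring | apply H3; rewrite Hz; ring].
Qed.

End QFactors.

(** ** The q-derivative at the origin *)

Lemma climit_of_lipschitz (g : C -> C) (z L : C) (K delta : R) :
  (0 < delta)%R -> (0 <= K)%R ->
  (forall s, s <> z -> (Cmod (s - z) < delta)%R ->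
     (Cmod (g s - L)%C <= K * Cmod (s - z)%C)%R) ->
  climit g z = L.
Proof.
  intros Hdelta HK Hg.
  assert (Hlim : filterlim g (locally' z) (locally L)).
  { intros P HP. apply (locally_norm_le_locally (V := C_NormedModule)) in HP.
    destruct HP as [eps Heps].
    set (del := Rmin delta (eps / (K + 1))).
    assert (Hdel : (0 < del)%R)
      by (apply Rmin_pos; [lra|apply Rdiv_lt_0_compat; [apply cond_pos|lra]]).
    apply (locally_le_locally_norm (V := C_NormedModule)).
    exists (mkposreal del Hdel). intros s Hs Hsz. apply Heps.
    change (Cmod (s - z) < del)%R in Hs. change (Cmod (g s - L) < eps)%R.
    assert (Hs1 : (Cmod (s - z) < delta)%R) by (eapply Rlt_le_trans; [exact Hs|apply Rmin_l]).
    assert (Hs2 : (Cmod (s - z) * (K + 1) < eps)%R).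
    { apply Rlt_div_r; [lra|]. eapply Rlt_le_trans; [exact Hs|apply Rmin_r]. }
    pose proof (Hg s Hsz Hs1). pose proof (Cmod_ge_0 (s - z)). nra. }
  unfold climit. destruct excluded_middle_informative as [Hex|Hex].
  - pose proof (proj2_sig (constructive_indefinite_description _ Hex)) as Hl. simpl in Hl.
    apply is_C_lim_unique in Hl. apply is_C_lim_unique in Hlim. congruence.
  - exfalso. apply Hex. now exists L.
Qed.

Lemma Dq_nz (q : R) (h : C -> C) (s : C) : s <> 0 -> Dq q h s = (h s - h (s * RtoC q)) / s.
Proof.
  intros Hs. unfold Dq. destruct excluded_middle_informative; [contradiction|reflexivity].
Qed.

Lemma Dq_0_of_lipschitz (q : R) (h : C -> C) (L : C) (K delta : R) :
  (0 < delta)%R -> (0 <= K)%R ->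
  (forall s : C, s <> RtoC 0 -> (Cmod s < delta)%R ->
     (Cmod ((h s - h (s * RtoC q)) / s - L)%C <= K * Cmod s)%R) ->
  Dq q h 0 = L.
Proof.
  intros Hdelta HK Hh. unfold Dq.
  destruct excluded_middle_informative as [_|H0]; [|now exfalso].
  apply (climit_of_lipschitz _ _ _ K delta Hdelta HK).
  intros s Hs Hsd. replace (s - 0) with s in * by ring. now apply Hh.
Qed.

(** ** The recurrence satisfied by the [y]-coefficients *)

Section Coefficients.

Variables (q : R) (f : C -> C -> C -> C -> C -> C -> C -> C) (cf : coef7) (r M rho : R).
Hypotheses (hq0 : (0 < q)%R) (hq1 : (q < 1)%R).
Hypothesis Hr : (0 < r)%R.
Hypothesis HB : forall N, (cube 7 N (weight7 cf r) <= M)%R.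
Hypothesis HC : taylor7_converges f cf r.
Hypotheses (Hrho : (0 < rho)%R) (Hrho_r : (rho <= r)%R) (Hrho_1 : (rho <= 1)%R).
Variables (a b c d e : C).
Hypotheses (Ha : (Cmod a < rho)%R) (Hb : (Cmod b < rho)%R) (Hc : (Cmod c < rho)%R)
  (Hd : (Cmod d < rho)%R) (He : (Cmod e < rho)%R).

Hypothesis Heq : forall x y : C, (Cmod x < rho)%R -> (Cmod y < rho)%R ->
  let F := f a b c d e in
  x * ((F x y - F x (y * RtoC q))
       - (d + e) / RtoC q * (F x (y * RtoC q) - F x (y * RtoC q ^ 2))
       + d * e / (RtoC q ^ 2) * (F x (y * RtoC q ^ 2) - F x (y * RtoC q ^ 3)))
  = y * ((F x y - F (x * RtoC q) y)
         - (a + b + c) * (F x (y * RtoC q) - F (x * RtoC q) (y * RtoC q))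
         + (a * b + a * c + b * c)
             * (F x (y * RtoC q ^ 2) - F (x * RtoC q) (y * RtoC q ^ 2))
         - a * b * c
             * (F x (y * RtoC q ^ 3) - F (x * RtoC q) (y * RtoC q ^ 3))).

Local Notation A := (ycoef cf a b c d e).

(* Coefficient of [y^m] in the difference of the two sides of the equation,
   once written with [y]-expansions of [f]. *)
Definition defect (t : C) (m : nat) : C :=
  match m with
  | O => t * A t O * lfac q d e O
  | S m => t * A t (S m) * lfac q d e (S m) - (A t m - A (t * RtoC q) m) * rfac q a b c m
  end.

Lemma shrink_rho (z : C) (j : nat) : (Cmod z < rho)%R -> (Cmod (z * RtoC q ^ j) < rho)%R.
Proof. intros Hz. eapply Rle_lt_trans; [apply Cmod_mul_qpow_le; assumption|exact Hz]. Qed.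

Lemma shrink_rho_q (z : C) : (Cmod z < rho)%R -> (Cmod (z * RtoC q) < rho)%R.
Proof. intros Hz. pose proof (shrink_rho z 1 Hz) as H. now rewrite Cpow_1_r in H. Qed.

Lemma defect_series (t y : C) :
  (Cmod t < rho)%R -> (Cmod y < rho)%R -> is_series (fun m => defect t m * y ^ m) (RtoC 0).
Proof.
  intros Ht Hy.
  assert (Ex : forall x z, (Cmod x < rho)%R -> (Cmod z < rho)%R ->
            is_series (fun m => A x m * z ^ m) (f a b c d e x z))
    by (intros x z Hx Hz; apply (y_expansion f cf r M); auto; lra).
  pose proof (shrink_rho_q t Ht) as HtQ. pose proof (shrink_rho_q y Hy) as Hy1.
  pose proof (shrink_rho y 2 Hy) as Hy2. pose proof (shrink_rho y 3 Hy) as Hy3.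
  assert (HQ : RtoC q <> 0).
  { intros Hz. apply (f_equal Cmod) in Hz. rewrite Cmod_Rpos, Cmod_0 in Hz; lra. }
  set (Q := RtoC q) in *.
  pose proof (Ex t y Ht Hy) as S0. pose proof (Ex t _ Ht Hy1) as S1.
  pose proof (Ex t _ Ht Hy2) as S2. pose proof (Ex t _ Ht Hy3) as S3.
  pose proof (Ex _ y HtQ Hy) as T0. pose proof (Ex _ _ HtQ Hy1) as T1.
  pose proof (Ex _ _ HtQ Hy2) as T2. pose proof (Ex _ _ HtQ Hy3) as T3.
  (* The two sides of the equation as series; multiplying the right-hand side
     by [y] shifts its terms by one. *)
  pose proof (seriesC_scal t _ _ (seriesC_plus _ _ _ _
      (seriesC_minus _ _ _ _ (seriesC_minus _ _ _ _ S0 S1)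
         (seriesC_scal ((d + e) / Q) _ _ (seriesC_minus _ _ _ _ S1 S2)))
      (seriesC_scal (d * e / Q ^ 2) _ _ (seriesC_minus _ _ _ _ S2 S3)))) as LHS.
  pose proof (seriesC_shift _ _ (seriesC_scal y _ _ (seriesC_minus _ _ _ _
      (seriesC_plus _ _ _ _
         (seriesC_minus _ _ _ _ (seriesC_minus _ _ _ _ S0 T0)
            (seriesC_scal (a + b + c) _ _ (seriesC_minus _ _ _ _ S1 T1)))
         (seriesC_scal (a * b + a * c + b * c) _ _ (seriesC_minus _ _ _ _ S2 T2)))
      (seriesC_scal (a * b * c) _ _ (seriesC_minus _ _ _ _ S3 T3))))) as RHS.
  pose proof (Heq t y Ht Hy) as Heq0. cbv zeta in Heq0. fold Q in Heq0.
  pose proof (seriesC_minus _ _ _ _ LHS RHS) as Tot.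
  apply seriesC_eq with (l' := RtoC 0) in Tot; [|rewrite Heq0; ring].
  revert Tot. apply is_series_ext. intros m.
  match goal with |- ?u = ?v => change (@eq C u v) end.
  clear -HQ. unfold Q in *.
  destruct m as [|k].
  - simpl shift. unfold defect, lfac. cbn [Cpow Nat.sub]. field. exact HQ.
  - simpl shift. unfold defect, lfac, rfac. replace (S k - 1)%nat with k by lia.
    rewrite !Cpow_mult_l, <- !Cpow_mult_r, (Nat.mul_comm 2 (S k)), (Nat.mul_comm 3 (S k)),
      !Cpow_mult_r, !Cpow_1_l, (Cpow_S y k), (Cpow_S (RtoC q) k).
    field. exact HQ.
Qed.

Lemma defect_bound (t : C) (m : nat) :
  (Cmod t < rho)%R -> (Cmod (defect t m) * r ^ m <= 8 * M + 16 * M * r)%R.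
Proof.
  intros Ht.
  assert (HA : forall x k, (Cmod x < rho)%R -> (Cmod (A x k) * r ^ k <= M)%R)
    by (intros x k Hx; apply (ycoef_spec cf r M Hr HB); lra).
  pose proof (M_nonneg cf r M Hr HB) as HM.
  assert (Hrk : forall k, (0 <= r ^ k)%R) by (intros k; apply pow_le; lra).
  assert (Hfirst : forall k, (Cmod (t * A t k * lfac q d e k) * r ^ k <= 8 * M)%R).
  { intros k. pose proof (lfac_bound q hq0 hq1 d e k ltac:(lra) ltac:(lra)) as HL.
    pose proof (Cmod_ge_0 t). pose proof (Cmod_ge_0 (lfac q d e k)).
    pose proof (Cmod_ge_0 (A t k)). pose proof (Hrk k).
    rewrite !Cmod_mult.
    replace (Cmod t * Cmod (A t k) * Cmod (lfac q d e k) * r ^ k)%R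
      with ((Cmod t * Cmod (lfac q d e k)) * (Cmod (A t k) * r ^ k))%R by ring.
    apply Rmult_le_compat; [nra|nra|nra|apply HA, Ht]. }
  assert (Hsecond : forall k,
    (Cmod ((A t k - A (t * RtoC q) k) * rfac q a b c k) * r ^ S k <= 16 * M * r)%R).
  { intros k. pose proof (rfac_bound q hq0 hq1 a b c k ltac:(lra) ltac:(lra) ltac:(lra)) as HR.
    pose proof (HA t k Ht). pose proof (HA _ k (shrink_rho_q t Ht)).
    pose proof (Cmod_sub_le (A t k) (A (t * RtoC q) k)).
    pose proof (Cmod_ge_0 (A t k - A (t * RtoC q) k)). pose proof (Cmod_ge_0 (rfac q a b c k)).
    pose proof (Hrk k).
    assert (Hdiff : (Cmod (A t k - A (t * RtoC q) k) * r ^ k <= 2 * M)%R) by nra.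
    rewrite Cmod_mult. simpl pow.
    replace (Cmod (A t k - A (t * RtoC q) k) * Cmod (rfac q a b c k) * (r * r ^ k))%R
      with ((Cmod (A t k - A (t * RtoC q) k) * r ^ k) * Cmod (rfac q a b c k) * r)%R by ring.
    replace (16 * M * r)%R with (2 * M * 8 * r)%R by ring.
    apply Rmult_le_compat_r; [lra|]. apply Rmult_le_compat; [nra|nra|exact Hdiff|exact HR]. }
  destruct m as [|m]; cbn [defect].
  - pose proof (Hfirst 0%nat). assert (0 <= 16 * M * r)%R by (apply Rmult_le_pos; lra). lra.
  - eapply Rle_trans; [apply Rmult_le_compat_r; [apply Hrk|apply Cmod_sub_le]|].
    rewrite Rmult_plus_distr_r. apply Rplus_le_compat; [apply Hfirst|apply Hsecond].
Qed.

(* Comparing coefficients of [y^(n+1)] in the q-difference equation. *)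
Lemma ycoef_recurrence (t : C) (n : nat) : (Cmod t < rho)%R ->
  t * A t (S n) * lfac q d e (S n) = (A t n - A (t * RtoC q) n) * rfac q a b c n.
Proof.
  intros Ht.
  assert (Hzero : defect t (S n) = 0).
  { apply (pseries_coef_zero (defect t) (8 * M + 16 * M * r) r rho Hr Hrho).
    - intros m. now apply defect_bound.
    - intros y Hy. now apply defect_series. }
  cbn [defect] in Hzero.
  match goal with |- ?u = ?v => replace u with ((u - v) + v) by ring end.
  rewrite Hzero. ring.
Qed.

Local Notation g := (fun t => f a b c d e t 0).

Lemma ycoef_0 (t : C) : (Cmod t < rho)%R -> A t 0 = f a b c d e t 0.
Proof.
  intros Ht.
  assert (Hser : is_series (fun m => A t m * 0 ^ m) (f a b c d e t 0))
    by (apply (y_expansion f cf r M); auto; rewrite ?Cmod_0; lra).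
  assert (Hconst : is_series (fun m => A t m * 0 ^ m) (A t 0)).
  { assert (Hpart : forall L, @eq C (sum_n (fun m => A t m * 0 ^ m) L) (A t 0)).
    { induction L as [|L IH]; [rewrite sum_O; simpl; ring|].
      rewrite sumC_Sn, IH. simpl. ring. }
    eapply filterlim_ext; [|apply filterlim_const]. intros L. symmetry. apply Hpart. }
  exact (filterlim_locally_unique (V := C_NormedModule) _ _ _ Hconst Hser).
Qed.

Lemma ycoef_step (n : nat) (h : C -> C) :
  (forall t, (Cmod t < rho)%R -> A t n = Tcoef q a b c d e n * h t) ->
  forall s : C, s <> 0 -> (Cmod s < rho)%R ->
  A s (S n) = Tcoef q a b c d e (S n) * ((h s - h (s * RtoC q)) / s).
Proof.
  intros IH s Hs0 Hs.
  assert (Hd1 : (Cmod d < 1)%R) by lra. assert (He1 : (Cmod e < 1)%R) by lra.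
  pose proof (lfac_nz q hq0 hq1 d e n Hd1 He1) as HL.
  pose proof (ycoef_recurrence s n Hs) as Hrec.
  rewrite (IH s Hs), (IH (s * RtoC q) (shrink_rho_q s Hs)) in Hrec.
  replace (A s (S n)) with (s * A s (S n) * lfac q d e (S n) / (s * lfac q d e (S n)))
    by (field; split; assumption).
  rewrite Hrec.
  replace ((Tcoef q a b c d e n * h s - Tcoef q a b c d e n * h (s * RtoC q)) * rfac q a b c n)
    with (Tcoef q a b c d e n * rfac q a b c n * (h s - h (s * RtoC q))) by ring.
  rewrite <- (Tcoef_S q hq0 hq1 a b c d e n Hd1 He1).
  field. split; assumption.
Qed.

(* The recurrence step at the origin, where [D_q] is defined by continuity:
   the Lipschitz estimate of the coefficients at [x = 0] identifies the limit. *)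
Lemma ycoef_step_0 (n : nat) (h : C -> C) :
  (forall t, (Cmod t < rho)%R -> A t n = Tcoef q a b c d e n * h t) ->
  A 0 (S n) = Tcoef q a b c d e (S n) * Dq q h 0.
Proof.
  intros IH.
  set (T' := Tcoef q a b c d e (S n)).
  assert (HT' : T' <> 0) by (apply Tcoef_nz; auto; lra).
  assert (HT'm : (0 < Cmod T')%R) by now apply Cmod_gt_0.
  assert (Hrn : (0 < r ^ S n)%R) by (apply pow_lt; lra).
  pose proof (M_nonneg cf r M Hr HB) as HM.
  rewrite (Dq_0_of_lipschitz q h (A 0 (S n) / T') (M / r ^ S n / r / Cmod T') rho);
    [field; exact HT'|exact Hrho|repeat apply Rdiv_le_0_compat; lra|].
  intros s Hs0 Hs.
  replace ((h s - h (s * RtoC q)) / s - A 0 (S n) / T') with ((A s (S n) - A 0 (S n)) / T')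
    by (rewrite (ycoef_step n h IH s Hs0 Hs); fold T'; field; split; assumption).
  rewrite Cmod_div by exact HT'.
  apply Rle_div_l; [exact HT'm|].
  eapply Rle_trans; [apply (ycoef_near0 cf r M Hr HB); lra|].
  right. field. repeat split; lra.
Qed.

Lemma ycoef_eq_T (n : nat) :
  forall t, (Cmod t < rho)%R -> A t n = Tcoef q a b c d e n * Dqn q n g t.
Proof.
  induction n as [|n IH]; intros t Ht.
  - rewrite ycoef_0 by exact Ht. change (Dqn q 0 g t) with (f a b c d e t 0).
    unfold Tcoef. cbn [qpoch]. field.
  - change (Dqn q (S n) g t) with (Dq q (Dqn q n g) t).
    destruct (Ceq_dec t 0) as [->|Ht0].
    + now apply ycoef_step_0.
    + rewrite Dq_nz by exact Ht0. now apply ycoef_step.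
Qed.

End Coefficients.

Theorem theorem2 (q : R) (hq0 : (0 < q)%R) (hq1 : (q < 1)%R)
  (f : C -> C -> C -> C -> C -> C -> C -> C)
  (Hf : analytic_at_origin7 f)
  (Heq : exists delta : R, (0 < delta)%R /\
     forall a b c d e x y : C,
       (Cmod a < delta)%R -> (Cmod b < delta)%R -> (Cmod c < delta)%R ->
       (Cmod d < delta)%R -> (Cmod e < delta)%R -> (Cmod x < delta)%R ->
       (Cmod y < delta)%R ->
       let F := f a b c d e in
       x * ((F x y - F x (y * RtoC q))
            - (d + e) / RtoC q * (F x (y * RtoC q) - F x (y * RtoC q ^ 2))
            + d * e / (RtoC q ^ 2) * (F x (y * RtoC q ^ 2) - F x (y * RtoC q ^ 3)))
       = y * ((F x y - F (x * RtoC q) y)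
              - (a + b + c) * (F x (y * RtoC q) - F (x * RtoC q) (y * RtoC q))
              + (a * b + a * c + b * c)
                  * (F x (y * RtoC q ^ 2) - F (x * RtoC q) (y * RtoC q ^ 2))
              - a * b * c
                  * (F x (y * RtoC q ^ 3) - F (x * RtoC q) (y * RtoC q ^ 3)))) :
  exists delta : R, (0 < delta)%R /\
    forall a b c d e x y : C,
      (Cmod a < delta)%R -> (Cmod b < delta)%R -> (Cmod c < delta)%R ->
      (Cmod d < delta)%R -> (Cmod e < delta)%R -> (Cmod x < delta)%R ->
      (Cmod y < delta)%R ->
      filterlim
        (fun N : nat => sum_n (fun n : nat =>
            Tcoef q a b c d e n * y ^ n
            * Dqn q n (fun t => f a b c d e t 0) x) N)
        eventually (locally (f a b c d e x y)).
Proof.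
  destruct Hf as (cf & r & M & Hr & HB & HC).
  destruct Heq as (delta & Hdelta & HE).
  (* Work on a polydisc where the Taylor series converges, the equation holds,
     and all parameters have modulus less than 1. *)
  set (rho := Rmin delta (Rmin r 1)).
  assert (Hrho : (0 < rho)%R) by (unfold rho; repeat apply Rmin_pos; lra).
  assert (Hrho_delta : (rho <= delta)%R) by apply Rmin_l.
  assert (Hrho_r : (rho <= r)%R) by (eapply Rle_trans; [apply Rmin_r|apply Rmin_l]).
  assert (Hrho_1 : (rho <= 1)%R) by (eapply Rle_trans; [apply Rmin_r|apply Rmin_r]).
  exists rho. split; [exact Hrho|].
  intros a b c d e x y Ha Hb Hc Hd He Hx Hy.
  pose proof (y_expansion f cf r M Hr HB HC a b c d e x y ltac:(lra) ltac:(lra) ltac:(lra)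
                ltac:(lra) ltac:(lra) ltac:(lra) ltac:(lra)) as Hexp.
  eapply filterlim_ext; [|exact Hexp]. intros N. apply sum_n_ext. intros n.
  rewrite (ycoef_eq_T q f cf r M rho hq0 hq1 Hr HB HC Hrho Hrho_r Hrho_1 a b c d e);
    try assumption.
  - match goal with |- ?u = ?v => change (@eq C u v) end. ring.
  - intros u v Hu Hv. apply HE; lra.
Qed.
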